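(* Let $r_{\rm A}>0$. There exists $\theta_0\in\,]0,\pi/2[$ such that for every $\theta_{\rm A}\in\,]\theta_0,\pi/2[$ the function $$T_I^S(\eta)=\int_{-\pi-\theta_{\rm A}}^{\theta_{\rm A}}\frac{r_{\rm A}^{3/2}(1-\eta\sin\theta_{\rm A})^{3/2}}{(1-\eta\sin\theta)^2}\,{\rm d}\theta,\qquad \eta\in\,]-1,1/\sin\theta_{\rm A}[,$$ is not convex.
   Context: Kepler problem normalized as $\ddot q=-q/|q|^3$, center ${\rm O}$ at the origin, polar coordinates $(r,\theta)$. With ${\rm A}=(r_{\rm A}\cos\theta_{\rm A},r_{\rm A}\sin\theta_{\rm A})$ and ${\rm B}=(-r_{\rm A}\cos\theta_{\rm A},r_{\rm A}\sin\theta_{\rm A})$, the simple indirect Keplerian arcs from ${\rm A}$ to ${\rm B}$ are the arcs of the conics $r=r_{\rm A}(1-\eta\sin\theta_{\rm A})/(1-\eta\sin\theta)$ ($\eta$ the signed eccentricity) passing below ${\rm O}$, with $\theta$ going from $\theta_{\rm A}$ down to $-\pi-\theta_{\rm A}$; these exist exactly for $\eta\in\,]-1,1/\sin\theta_{\rm A}[$, and $T_I^S(\eta)$ is their elapsed time (using $C=r^2|\dot\theta|$, $C^2=r_{\rm A}(1-\eta\sin\theta_{\rm A})$). *)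

From Stdlib Require Import Reals Lra ClassicalEpsilon.
Open Scope R_scope.

Definition TIS_integrand (rA thA eta : R) (th : R) : R :=
  Rpower rA (3/2) * Rpower (1 - eta * sin thA) (3/2) / (1 - eta * sin th) ^ 2.

(* Riemann integral over [a,b] when the function is Riemann integrable
   (default 0 otherwise; never used in the relevant range, where the
   integrand is continuous). *)
Definition RInt_cl (f : R -> R) (a b : R) : R :=
  match excluded_middle_informative (exists pr : Riemann_integrable f a b, True) with
  | left H => RiemannInt (proj1_sig (constructive_indefinite_description _ H))
  | right _ => 0
  end.

Definition T_IS (rA thA eta : R) : R :=
  RInt_cl (TIS_integrand rA thA eta) (- PI - thA) thA.

Definition convex_on_open (f : R -> R) (a b : R) : Prop :=
  forall x y t, a < x < b -> a < y < b -> 0 <= t <= 1 ->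
    f (t * x + (1 - t) * y) <= t * f x + (1 - t) * f y.

From Stdlib Require Import Reals Lra ClassicalEpsilon.
From Coquelicot Require Import Coquelicot.
Open Scope R_scope.

(* Write [D th = 1 - eta sin th] and [q ^ 2 = D thA]; then [T = rA^(3/2) q^3 I] with
   [I = int D^-2], and, with [J = int D^-1], the antiderivative [cos th / D] of
   [(eta - sin th) / D^2] gives [(eta^2 - 1) I = 2 eta cos thA / q^2 - J].  Since
   [0 <= J <= (q I + (2 thA + PI) / q) / 2] by AM-GM, for small [q] the value [T] is
   squeezed around [2 rA^(3/2) eta cos thA q / (eta^2 - 1)]: it behaves like a multiple
   of [q = sqrt (1 - eta sin thA)], a strictly concave function of [eta].  Comparing [T]
   at [q = 2e, e, e/10] with [e = cos thA ^ 2 / 100], where the middle [eta] is the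
   [99/399]-combination of the outer ones, contradicts convexity.  The argument works
   for every [thA] in ]0, PI/2[ and every [rA], so any [th0] will do. *)

Lemma RInt_cl_RInt f a b : ex_RInt f a b -> RInt_cl f a b = RInt f a b.
Proof.
  intros Hf. unfold RInt_cl.
  destruct excluded_middle_informative as [Hex | Hnex].
  - rewrite <- RInt_Reals. reflexivity.
  - exfalso. apply Hnex. exists (ex_RInt_Reals_0 _ _ _ Hf). exact I.
Qed.

Lemma inv_le_AM_GM u t : 0 < u -> 0 < t -> / u <= (t / u ^ 2 + / t) / 2.
Proof.
  intros Hu Ht.
  assert (Hgap : (t / u ^ 2 + / t) / 2 - / u = (t - u) ^ 2 / (2 * t * u ^ 2)) by (field; lra).
  assert (0 <= (t - u) ^ 2 / (2 * t * u ^ 2)).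
  { apply Rmult_le_pos; [apply pow2_ge_0 |].
    apply Rlt_le, Rinv_0_lt_compat, Rmult_lt_0_compat; [lra | apply pow_lt; lra]. }
  lra.
Qed.

Section Reciprocal_integrals.

Variables eta a b : R.
Hypothesis a_le_b : a <= b.
Hypothesis denom_pos : forall th, a <= th <= b -> 0 < 1 - eta * sin th.

Let denom_pos_minmax th : Rmin a b <= th <= Rmax a b -> 0 < 1 - eta * sin th.
Proof. rewrite Rmin_left, Rmax_right by exact a_le_b. exact (denom_pos th). Qed.

Lemma ex_RInt_inv_denom_pow n : ex_RInt (fun th => / (1 - eta * sin th) ^ n) a b.
Proof.
  apply (ex_RInt_continuous (V := R_CompleteNormedModule)). intros th Hth.
  apply (ex_derive_continuous (K := R_AbsRing) (V := R_NormedModule)).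
  auto_derive. apply pow_nonzero. specialize (denom_pos_minmax th Hth). lra.
Qed.

Lemma ex_RInt_inv_denom : ex_RInt (fun th => / (1 - eta * sin th)) a b.
Proof.
  apply (ex_RInt_ext (fun th => / (1 - eta * sin th) ^ 1)).
  - intros th _. now rewrite pow_1.
  - apply ex_RInt_inv_denom_pow.
Qed.

Lemma RInt_inv_denom_sq_identity :
  (eta ^ 2 - 1) * RInt (fun th => / (1 - eta * sin th) ^ 2) a b
  = eta * (cos b / (1 - eta * sin b) - cos a / (1 - eta * sin a))
    - RInt (fun th => / (1 - eta * sin th)) a b.
Proof.
  assert (Hg : is_RInt (fun th => (eta - sin th) / (1 - eta * sin th) ^ 2) a b
                 (cos b / (1 - eta * sin b) - cos a / (1 - eta * sin a))).
  { apply (is_RInt_derive (V := R_CompleteNormedModule)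
             (fun th => cos th / (1 - eta * sin th))).
    - intros th Hth. specialize (denom_pos_minmax th Hth). auto_derive; [lra |].
      pose proof (sin2_cos2 th) as Hpyth. unfold Rsqr in Hpyth.
      field_simplify; [| lra | lra].
      apply (f_equal (fun num => num / _)).
      pose proof (f_equal (Rmult eta) Hpyth). nra.
    - intros th Hth. specialize (denom_pos_minmax th Hth).
      apply (ex_derive_continuous (K := R_AbsRing) (V := R_NormedModule)).
      auto_derive. nra. }
  assert (Hcomb := is_RInt_minus (V := R_CompleteNormedModule) _ _ a b _ _
                    (is_RInt_scal _ _ _ eta _ Hg) (RInt_correct _ _ _ ex_RInt_inv_denom)).
  rewrite <- (RInt_scal (V := R_CompleteNormedModule)) by apply ex_RInt_inv_denom_pow.
  apply is_RInt_unique. revert Hcomb. apply is_RInt_ext.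
  intros th Hth. rewrite Rmin_left, Rmax_right in Hth by lra.
  assert (0 < 1 - eta * sin th) by (apply denom_pos; lra).
  unfold minus, plus, opp, scal; simpl; unfold mult; simpl. field. lra.
Qed.

Lemma RInt_inv_denom_le_AM_GM t : 0 < t ->
  RInt (fun th => / (1 - eta * sin th)) a b
  <= (t * RInt (fun th => / (1 - eta * sin th) ^ 2) a b + (b - a) / t) / 2.
Proof.
  intros Ht.
  set (I2 := RInt (fun th => / (1 - eta * sin th) ^ 2) a b).
  assert (Hbound : is_RInt (fun th => (t / (1 - eta * sin th) ^ 2 + / t) / 2) a b
                     ((t * I2 + (b - a) / t) / 2)).
  { assert (Hsum := is_RInt_scal (V := R_CompleteNormedModule) _ a b (/ 2) _
                      (is_RInt_plus _ _ a b _ _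
                         (is_RInt_scal _ a b t _ (RInt_correct _ _ _ (ex_RInt_inv_denom_pow 2)))
                         (is_RInt_const a b (/ t)))).
    revert Hsum. unfold plus, scal; simpl; unfold mult; simpl.
    replace ((t * I2 + (b - a) / t) / 2) with (/ 2 * (t * I2 + (b - a) * / t)) by (unfold Rdiv; ring).
    apply is_RInt_ext. intros th _. unfold Rdiv. apply Rmult_comm. }
  rewrite <- (is_RInt_unique _ _ _ _ Hbound).
  apply RInt_le; [exact a_le_b | exact ex_RInt_inv_denom | eexists; exact Hbound |].
  intros th Hth. apply inv_le_AM_GM; [apply denom_pos; lra | exact Ht].
Qed.

End Reciprocal_integrals.

Lemma sin_le_sin_on_arc thA th :
  0 < thA < PI / 2 -> - PI - thA <= th <= thA -> sin th <= sin thA.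
Proof.
  intros HthA Hth. destruct (Rle_dec (- (PI / 2)) th).
  - apply sin_incr_1; lra.
  - replace (sin th) with (sin (- PI - th)).
    + apply sin_incr_1; lra.
    + replace (- PI - th) with (- (th + PI)) by ring. rewrite sin_neg, neg_sin. ring.
Qed.

Lemma Rpower_sq_three_halves q : 0 < q -> Rpower (q ^ 2) (3 / 2) = q ^ 3.
Proof.
  intros Hq. rewrite <- (Rpower_pow 2 q Hq), Rpower_mult.
  replace (INR 2 * (3 / 2)) with (INR 3) by (simpl; field).
  apply Rpower_pow, Hq.
Qed.

Section Arc.

Variables thA eta : R.
Hypothesis thA_range : 0 < thA < PI / 2.
Hypothesis eta_nonneg : 0 <= eta.
Hypothesis denom_pos_thA : 0 < 1 - eta * sin thA.

Lemma denom_pos_on_arc th : - PI - thA <= th <= thA -> 0 < 1 - eta * sin th.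
Proof.
  intros Hth. pose proof (sin_le_sin_on_arc thA th thA_range Hth). nra.
Qed.

Let arc_nonempty : - PI - thA <= thA.
Proof. pose proof PI_RGT_0. lra. Qed.

Lemma T_IS_eq_RInt rA :
  T_IS rA thA eta = Rpower rA (3 / 2) * Rpower (1 - eta * sin thA) (3 / 2)
                    * RInt (fun th => / (1 - eta * sin th) ^ 2) (- PI - thA) thA.
Proof.
  set (K := Rpower rA (3 / 2) * Rpower (1 - eta * sin thA) (3 / 2)).
  unfold T_IS, TIS_integrand. rewrite RInt_cl_RInt.
  - change (K * _) with (scal K (RInt (fun th => / (1 - eta * sin th) ^ 2) (- PI - thA) thA)).
    rewrite <- (RInt_scal (V := R_CompleteNormedModule))
      by apply (ex_RInt_inv_denom_pow eta _ _ arc_nonempty denom_pos_on_arc).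
    apply RInt_ext. intros th _. unfold scal; simpl; unfold mult; simpl. unfold K, Rdiv. reflexivity.
  - apply (ex_RInt_continuous (V := R_CompleteNormedModule)). intros th Hth.
    rewrite Rmin_left, Rmax_right in Hth by exact arc_nonempty.
    apply (ex_derive_continuous (K := R_AbsRing) (V := R_NormedModule)).
    pose proof (denom_pos_on_arc th Hth). auto_derive. nra.
Qed.

Lemma RInt_inv_denom_sq_on_arc :
  (eta ^ 2 - 1) * RInt (fun th => / (1 - eta * sin th) ^ 2) (- PI - thA) thA
  = 2 * eta * cos thA / (1 - eta * sin thA)
    - RInt (fun th => / (1 - eta * sin th)) (- PI - thA) thA.
Proof.
  rewrite (RInt_inv_denom_sq_identity eta _ _ arc_nonempty denom_pos_on_arc).
  replace (- PI - thA) with (- (thA + PI)) by ring.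
  rewrite sin_neg, cos_neg, neg_sin, neg_cos. field. lra.
Qed.

End Arc.

Lemma T_IS_sample_bounds rA thA q :
  0 < thA < PI / 2 -> 0 < q <= 1 ->
  let s := sin thA in let c := cos thA in let K := Rpower rA (3 / 2) in
  let T := T_IS rA thA ((1 - q ^ 2) / s) in
  0 <= T /\
  (c ^ 2 - 2 * q ^ 2 + q ^ 4) * T <= 2 * K * c * s * q * (1 - q ^ 2) /\
  K * q * (2 * c * s * (1 - q ^ 2) - (2 * thA + PI) * s ^ 2 * q / 2)
    <= (c ^ 2 - 2 * q ^ 2 + q ^ 4 + s ^ 2 * q / 2) * T.
Proof.
  intros HthA Hq s c K T.
  set (eta := (1 - q ^ 2) / s) in T.
  assert (Hs : 0 < s) by (apply sin_gt_0; lra).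
  assert (Hpyth : s ^ 2 + c ^ 2 = 1) by (unfold s, c; pose proof (sin2_cos2 thA); unfold Rsqr in *; lra).
  assert (HK : 0 < K) by apply exp_pos.
  assert (Hq2 : 1 - eta * s = q ^ 2) by (unfold eta; field; lra).
  assert (Heta : 0 <= eta).
  { unfold eta. apply Rmult_le_pos; [nra | apply Rlt_le, Rinv_0_lt_compat, Hs]. }
  assert (Hdenom : 0 < 1 - eta * sin thA) by (fold s; nra).
  assert (Hpos := denom_pos_on_arc thA eta HthA Heta Hdenom).
  assert (Harc : - PI - thA <= thA) by (pose proof PI_RGT_0; lra).
  set (I := RInt (fun th => / (1 - eta * sin th) ^ 2) (- PI - thA) thA).
  set (J := RInt (fun th => / (1 - eta * sin th)) (- PI - thA) thA).
  assert (HT : T = K * q ^ 3 * I).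
  { unfold T. rewrite T_IS_eq_RInt by assumption. fold s. rewrite Hq2, Rpower_sq_three_halves by lra. reflexivity. }
  assert (HI : 0 <= I).
  { apply RInt_ge_0; [exact Harc | exact (ex_RInt_inv_denom_pow eta _ _ Harc Hpos 2) |].
    intros th Hth. apply Rlt_le, Rinv_0_lt_compat, pow_lt, Hpos. lra. }
  assert (HJ : 0 <= J).
  { apply RInt_ge_0; [exact Harc | exact (ex_RInt_inv_denom eta _ _ Harc Hpos) |].
    intros th Hth. apply Rlt_le, Rinv_0_lt_compat, Hpos. lra. }
  assert (HJ_AM_GM : J <= (q * I + (2 * thA + PI) / q) / 2).
  { replace (2 * thA + PI) with (thA - (- PI - thA)) by ring.
    apply (RInt_inv_denom_le_AM_GM eta _ _ Harc Hpos q). lra. }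
  assert (HTJ : (c ^ 2 - 2 * q ^ 2 + q ^ 4) * T = 2 * K * c * s * q * (1 - q ^ 2) - s ^ 2 * K * q ^ 3 * J).
  { assert (HIJ := RInt_inv_denom_sq_on_arc thA eta HthA Heta Hdenom).
    fold s c I J in HIJ. rewrite Hq2 in HIJ.
    replace (c ^ 2 - 2 * q ^ 2 + q ^ 4) with (s ^ 2 * (eta ^ 2 - 1))
      by (replace (s ^ 2 * (eta ^ 2 - 1)) with ((1 - eta * s) ^ 2 - 2 * (1 - eta * s) + 1 - s ^ 2) by ring;
          rewrite Hq2; lra).
    rewrite HT.
    replace (s ^ 2 * (eta ^ 2 - 1) * (K * q ^ 3 * I)) with (s ^ 2 * K * q ^ 3 * ((eta ^ 2 - 1) * I)) by ring.
    rewrite HIJ. replace (1 - q ^ 2) with (eta * s) by lra. field. lra. }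
  assert (Hs2Kq3 : 0 <= s ^ 2 * K * q ^ 3) by (apply Rmult_le_pos; [nra | apply pow_le; lra]).
  split; [| split].
  - rewrite HT. apply Rmult_le_pos; [| exact HI]. apply Rmult_le_pos; [lra | apply pow_le; lra].
  - rewrite HTJ. nra.
  - assert (HJT : s ^ 2 * K * q ^ 3 * J <= s ^ 2 * q * T / 2 + s ^ 2 * K * q ^ 2 * (2 * thA + PI) / 2).
    { replace (s ^ 2 * q * T / 2 + s ^ 2 * K * q ^ 2 * (2 * thA + PI) / 2)
        with (s ^ 2 * K * q ^ 3 * ((q * I + (2 * thA + PI) / q) / 2)) by (rewrite HT; field; lra).
      apply Rmult_le_compat_l; assumption. }
    lra.
Qed.

Lemma sample_bounds_contradict_convexity K s c L Tx Ty Tz :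
  0 < K -> 0 < s -> 0 < c -> s ^ 2 + c ^ 2 = 1 -> L <= 8 ->
  let e := c ^ 2 / 100 in
  let P q := c ^ 2 - 2 * q ^ 2 + q ^ 4 in
  0 <= Ty -> 0 <= Tz ->
  P (2 * e) * Tx <= 2 * K * c * s * (2 * e) * (1 - (2 * e) ^ 2) ->
  P (e / 10) * Tz <= 2 * K * c * s * (e / 10) * (1 - (e / 10) ^ 2) ->
  K * e * (2 * c * s * (1 - e ^ 2) - L * s ^ 2 * e / 2) <= (P e + s ^ 2 * e / 2) * Ty ->
  Ty <= 99 / 399 * Tx + (1 - 99 / 399) * Tz ->
  False.
Proof.
  intros HK Hs Hc Hpyth HL e P HTy HTz Hx Hz Hy Hconv.
  unfold P in *.
  assert (Hc1 : c <= 1) by nra.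
  assert (Hs1 : s <= 1) by nra.
  assert (Hedef : 100 * e = c ^ 2) by (unfold e; field).
  assert (He : 0 < e) by nra.
  assert (Hec : e <= c / 100) by (unfold e; nra).
  assert (He2 : e ^ 2 <= c ^ 2 / 10000) by nra.
  assert (HKcse : 0 < K * c * s * e) by (repeat apply Rmult_lt_0_compat; lra).
  set (Px := c ^ 2 - 2 * (2 * e) ^ 2 + (2 * e) ^ 4) in *.
  assert (HPx : 0 < Px) by (unfold Px; nra).
  assert (HPxz : Px <= c ^ 2 - 2 * (e / 10) ^ 2 + (e / 10) ^ 4) by (unfold Px; nra).
  assert (HPy : c ^ 2 - 2 * e ^ 2 + e ^ 4 + s ^ 2 * e / 2 <= 101 / 100 * Px).
  { assert (s ^ 2 * e <= e) by nra. assert (0 <= e ^ 4) by nra. unfold Px. lra. }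
  assert (HUx : Px * Tx <= 4 * (K * c * s * e)) by nra.
  assert (HUz : Px * Tz <= (K * c * s * e) / 5) by nra.
  assert (HUy : Px * Ty <= 456 / 399 * (K * c * s * e)) by nra.
  assert (HLy : 195 / 100 * (K * c * s * e) <= K * e * (2 * c * s * (1 - e ^ 2) - L * s ^ 2 * e / 2)).
  { assert (Hs2e : 0 <= s ^ 2 * e) by nra.
    assert (L * (s ^ 2 * e) <= 8 * (s ^ 2 * e)) by nra.
    assert (s ^ 2 * e <= s * e) by nra.
    assert (s * e <= s * (c / 100)) by nra.
    assert (c * s * e ^ 2 <= c * s / 10000) by nra.
    replace (195 / 100 * (K * c * s * e)) with (K * e * (195 / 100 * (c * s))) by ring.
    apply Rmult_le_compat_l; [nra | lra]. }
  nra.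
Qed.

Lemma sample_eta_in_domain s q : 0 < s -> 0 < q <= 1 -> -1 < (1 - q ^ 2) / s < 1 / s.
Proof.
  intros Hs Hq. unfold Rdiv. split.
  - apply Rlt_le_trans with 0; [lra |].
    apply Rmult_le_pos; [nra | apply Rlt_le, Rinv_0_lt_compat, Hs].
  - apply Rmult_lt_compat_r; [apply Rinv_0_lt_compat, Hs | nra].
Qed.

Lemma T_IS_not_convex rA thA : 0 < thA < PI / 2 ->
  ~ convex_on_open (fun eta => T_IS rA thA eta) (-1) (1 / sin thA).
Proof.
  intros HthA Hconv.
  set (s := sin thA). set (c := cos thA).
  assert (Hs : 0 < s) by (apply sin_gt_0; lra).
  assert (Hc : 0 < c) by (apply cos_gt_0; lra).
  assert (Hpyth : s ^ 2 + c ^ 2 = 1) by (unfold s, c; pose proof (sin2_cos2 thA); unfold Rsqr in *; lra).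
  set (e := c ^ 2 / 100).
  assert (He : 0 < e <= 1 / 100) by (unfold e; split; nra).
  assert (Hx : 0 < 2 * e <= 1) by lra.
  assert (Hy : 0 < e <= 1) by lra.
  assert (Hz : 0 < e / 10 <= 1) by lra.
  pose proof (T_IS_sample_bounds rA thA _ HthA Hx) as (_ & Ux & _).
  pose proof (T_IS_sample_bounds rA thA _ HthA Hy) as (Ty0 & _ & Ly).
  pose proof (T_IS_sample_bounds rA thA _ HthA Hz) as (Tz0 & Uz & _).
  assert (Hmid := Hconv _ _ (99 / 399) (sample_eta_in_domain s _ Hs Hx)
                    (sample_eta_in_domain s _ Hs Hz) ltac:(lra)).
  replace (99 / 399 * ((1 - (2 * e) ^ 2) / s) + (1 - 99 / 399) * ((1 - (e / 10) ^ 2) / s))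
    with ((1 - e ^ 2) / s) in Hmid by (field; lra).
  apply (sample_bounds_contradict_convexity (Rpower rA (3 / 2)) s c (2 * thA + PI) _ _ _
           (exp_pos _) Hs Hc Hpyth ltac:(pose proof PI_4; lra) Ty0 Tz0 Ux Uz Ly Hmid).
Qed.

Theorem proposition8 (rA : R) (hrA : 0 < rA) :
  exists th0 : R, 0 < th0 < PI / 2 /\
    forall thA : R, th0 < thA < PI / 2 ->
      ~ convex_on_open (fun eta => T_IS rA thA eta) (-1) (1 / sin thA).
Proof.
  exists (PI / 4). pose proof PI_RGT_0. split; [lra |].
  intros thA HthA. apply T_IS_not_convex. lra.
Qed.
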